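(* Let $k$ and $d$ be two positive integers. Let $f$ be any $n$-variable Boolean function such that ${AI}(f)=k$. Let $\delta$ be any $n$-variable Boolean function such that $w_H(\delta)<\min(2^{n-k},2^{d+1}-1)$. Then $|{AI}(f+\delta)-{AI}(f)|\le d$.
   Context: An $n$-variable Boolean function is a map $\mathbb{F}_2^n\to\mathbb{F}_2$, with algebraic degree the degree of its algebraic normal form; $w_H(\delta)$ is the Hamming weight (number of $x$ with $\delta(x)=1$). ${LDA}(h)$ is the minimum algebraic degree of a nonzero $g$ with $h\cdot g=0$, and the algebraic immunity is ${AI}(f)=\min({LDA}(f),{LDA}(1+f))$. *)

From mathcomp Require Import all_boot.
Set Implicit Arguments. Unset Strict Implicit. Unset Printing Implicit Defensive.

(* Points of F_2^n and n-variable Boolean functions F_2^n -> F_2 (F_2 = bool, + = xor). *)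
Definition vec (n : nat) := {ffun 'I_n -> bool}.
Definition boolfun (n : nat) := {ffun vec n -> bool}.

Definition bf_add n (f g : boolfun n) : boolfun n := [ffun x => f x (+) g x].
Definition bf_mul n (f g : boolfun n) : boolfun n := [ffun x => f x && g x].
Definition bf_one n : boolfun n := [ffun _ => true].
Definition bf_zero n : boolfun n := [ffun _ => false].

(* Algebraic normal form: coefficients a_S for monomials prod_{i in S} x_i,
   evaluated as the xor-sum of the monomials with a_S = 1. *)
Definition anf_eval n (a : {ffun {set 'I_n} -> bool}) (x : vec n) : bool :=
  \big[addb/false]_(S : {set 'I_n} | a S) [forall i in S, x i].

Definition deg_le n (f : boolfun n) (d : nat) : bool :=
  [exists a : {ffun {set 'I_n} -> bool},
     [forall x, f x == anf_eval a x] && [forall S, a S ==> (#|S| <= d)]].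

Definition has_ann_le n (h : boolfun n) (d : nat) : bool :=
  [exists g : boolfun n,
     [&& g != bf_zero n, bf_mul h g == bf_zero n & deg_le g d]].

(* Every Boolean
   function has degree <= n, so the minimum is over 0..n; the default n+1
   ("infinity") only occurs when h has no nonzero annihilator (h = 1). *)
Definition LDA n (h : boolfun n) : nat :=
  \big[minn/n.+1]_(j < n.+1 | has_ann_le h j) j.

Definition AI n (f : boolfun n) : nat := minn (LDA f) (LDA (bf_add (bf_one n) f)).

Definition wH n (f : boolfun n) : nat := #|[pred x | f x]|.

From mathcomp Require Import all_boot zify.
Set Implicit Arguments. Unset Strict Implicit. Unset Printing Implicit Defensive.

(* Let g be a nonzero annihilator of degree e of f (or of 1 + f).  A nonzero
   function of degree at most e has weight at least 2^(n-e): if S is a maximal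
   monomial of its ANF, its xor over each of the 2^(n-|S|) subcubes spanned by
   the coordinates in S is the coefficient of S, i.e. 1.  Hence if
   w_H(delta) < 2^(n-e), g is 1 at some x outside the support of delta.  Any
   values on fewer than 2^(d+1) points are interpolated by a function of
   degree at most d (split the points along a coordinate where two of them
   differ and induct), so some h of degree at most d is 1 at x and 0 on the
   support of delta.  Then g h is a nonzero annihilator of f + delta (resp.
   1 + f + delta) of degree at most e + d.  The reverse inequality is the
   same argument applied to f + delta when its immunity is below AI f. *)

Section AlgebraicDegree.
Variable n : nat.

Definition mono (S : {set 'I_n}) (x : vec n) : bool := [forall i in S, x i].

Lemma mono_subset (S : {set 'I_n}) x : mono S x = (S \subset [set i | x i]).
Proof. by apply/forall_inP/subsetP => Sx i /Sx; rewrite inE. Qed.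

Lemma mono_setU (S T : {set 'I_n}) x : mono (S :|: T) x = mono S x && mono T x.
Proof. by rewrite !mono_subset subUset. Qed.

Definition has_deg_le (F : vec n -> bool) (d : nat) :=
  exists a : {ffun {set 'I_n} -> bool},
    (forall x, F x = anf_eval a x) /\ (forall S, a S -> #|S| <= d).

Lemma deg_leP (f : boolfun n) d : reflect (has_deg_le f d) (deg_le f d).
Proof.
apply: (iffP existsP) => [[a /andP[/forallP fa /forallP ad]]|[a [fa ad]]].
  by exists a; split => [x|S]; [exact/eqP | exact/implyP].
by exists a; apply/andP; split; apply/forallP => x; [rewrite fa | exact/implyP/ad].
Qed.

Lemma anf_evalE a x : anf_eval a x = \big[addb/false]_S (a S && mono S x).
Proof. by rewrite /anf_eval big_mkcond; apply: eq_bigr => S _; case: (a S). Qed.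

Lemma has_deg_le_ext F G d : has_deg_le F d -> F =1 G -> has_deg_le G d.
Proof. by move=> [a [Fa ad]] FG; exists a; split => // x; rewrite -FG. Qed.

Lemma has_deg_le_mono (S : {set 'I_n}) d : #|S| <= d -> has_deg_le (mono S) d.
Proof.
move=> Sd; exists [ffun T => T == S]; split => [x|T]; last by rewrite ffunE => /eqP ->.
by rewrite /anf_eval (eq_bigl (pred1 S)) ?big_pred1_eq // => T; rewrite ffunE.
Qed.

Lemma has_deg_le_const (b : bool) d : has_deg_le (fun _ => b) d.
Proof.
case: b.
  have /has_deg_le_mono set0d : #|@set0 'I_n| <= d by rewrite cards0.
  by apply: (has_deg_le_ext set0d) => x; rewrite mono_subset sub0set.
exists [ffun T => false]; split => [x|T]; last by rewrite ffunE.
by rewrite /anf_eval big_pred0 // => T; rewrite ffunE.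
Qed.

Lemma has_deg_le_coord i : has_deg_le (fun x => x i) 1.
Proof.
apply: (has_deg_le_ext (has_deg_le_mono (eq_leq (cards1 i)))) => x.
by rewrite mono_subset sub1set inE.
Qed.

Lemma has_deg_le_add F G d :
  has_deg_le F d -> has_deg_le G d -> has_deg_le (fun x => F x (+) G x) d.
Proof.
move=> [a [Fa ad]] [b [Gb bd]]; exists [ffun S => a S (+) b S]; split => [x|S].
  rewrite Fa Gb !anf_evalE -big_split; apply: eq_bigr => S _.
  by rewrite ffunE andb_addl.
rewrite ffunE => abS; have /orP[/ad|/bd] // : a S || b S.
by move: abS; case: (a S).
Qed.

Lemma has_deg_le_literal i (b : bool) : has_deg_le (fun x => x i == b) 1.
Proof.
have := has_deg_le_add (has_deg_le_const (~~ b) 1) (has_deg_le_coord i).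
by move/has_deg_le_ext; apply=> x; case: b; case: (x i).
Qed.

Lemma has_deg_le_mul F G d1 d2 : has_deg_le F d1 -> has_deg_le G d2 ->
  has_deg_le (fun x => F x && G x) (d1 + d2).
Proof.
move=> [a [Fa ad]] [b [Gb bd]].
exists [ffun U => \big[addb/false]_(p | p.1 :|: p.2 == U) (a p.1 && b p.2)].
split => [x|U].
  rewrite Fa Gb !anf_evalE big_distrlr pair_bigA /=.
  rewrite (partition_big (fun p => p.1 :|: p.2) predT) //=; apply: eq_bigr => U _.
  rewrite ffunE big_distrl /=; apply: eq_bigr => -[S T] /eqP <-.
  by rewrite mono_setU andbACA.
rewrite ffunE; apply: contraTT; rewrite -ltnNge => dU.
rewrite big1 // => p /eqP pU; apply/negbTE/negP => /andP[/ad S1 /bd S2].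
by move: dU; rewrite -pU cardsU; lia.
Qed.

End AlgebraicDegree.

Section Interpolation.
Variable n : nat.

Definition hyperplane (i : 'I_n) (b : bool) : {set vec n} := [set z : vec n | z i == b].

Lemma interpolation_step i b d (T : {set vec n}) (v h0 h1 : vec n -> bool) :
  has_deg_le h0 d.+1 -> {in T :\: hyperplane i b, h0 =1 v} ->
  has_deg_le h1 d -> {in T :&: hyperplane i b, h1 =1 (fun z => v z (+) h0 z)} ->
  exists2 h, has_deg_le h d.+1 & {in T, h =1 v}.
Proof.
move=> h0d h0v h1d h1v; exists (fun z => h0 z (+) ((z i == b) && h1 z)).
  apply: has_deg_le_add h0d _; rewrite -add1n.
  exact: has_deg_le_mul (has_deg_le_literal i b) h1d.
move=> z zT; case zib: (z i == b) => /=.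
  by rewrite h1v ?inE ?zT ?zib // addbC addbK.
by rewrite addbF h0v // !inE zT zib.
Qed.

Lemma interpolation d (T : {set vec n}) (v : vec n -> bool) :
  #|T| < 2 ^ d.+1 -> exists2 h, has_deg_le h d & {in T, h =1 v}.
Proof.
have [m] := ubnP #|T|; elim: m T d v => // m IH T d v Tm Td.
have [/card_le1_eqP T1|T_gt1] := leqP #|T| 1.
  exists (fun _ => if [pick z in T] is Some z0 then v z0 else false).
    exact: has_deg_le_const.
  move=> z zT; case: pickP => [z0 z0T|/(_ z)]; last by rewrite zT.
  by rewrite (T1 _ _ zT z0T).
case/card_gt1P: (T_gt1) => x [y [xT yT /eqP xy]].
case: d Td => [|d] Td; first by move: Td; rewrite expn1; lia.
have [i xyi] : exists i, x i != y i.
  apply/existsP; apply: contra_notT xy => /existsPn xy.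
  by apply/ffunP => i; apply/eqP/negPn/xy.
pose H b := T :&: hyperplane i b.
have H_gt0 b : 0 < #|H b|.
  apply/card_gt0P; case: (eqVneq (x i) b) => [xib|xib].
    by exists x; rewrite !inE xT xib eqxx.
  exists y; rewrite !inE yT.
  by move: xib xyi; case: (x i); case: (y i); case: b.
have HC b : T :\: hyperplane i b = H (~~ b).
  by apply/setP => z; rewrite !inE andbC; case: (z i); case: b.
have card_H b : #|H b| + #|H (~~ b)| = #|T| by rewrite -HC cardsID.
have [b small] : exists b, #|H b| < 2 ^ d.+1.
  have : #|H true| + #|H false| = #|T| := card_H true.
  rewrite expnS in Td.
  by case: (leqP (2 ^ d.+1) #|H true|) => ?; [exists false | exists true]; lia.
have [h0 h0d h0v] : exists2 h0, has_deg_le h0 d.+1 & {in T :\: hyperplane i b, h0 =1 v}.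
  apply: IH; last by apply: leq_ltn_trans Td; exact/subset_leq_card/subsetDl.
  by rewrite HC; have := card_H b; have := H_gt0 b; lia.
have [h1 h1d h1v] :
    exists2 h1, has_deg_le h1 d & {in H b, h1 =1 (fun z => v z (+) h0 z)}.
  by apply: IH small; have := card_H b; have := H_gt0 (~~ b); lia.
exact: interpolation_step h0d h0v h1d h1v.
Qed.

End Interpolation.

Lemma big_addb_involution (I : finType) (s : I -> I) (p P : pred I) (F : I -> bool) :
  involutive s -> (forall z, p (s z) = ~~ p z) ->
  (forall z, P (s z) = P z) -> (forall z, F (s z) = F z) ->
  \big[addb/false]_(z | P z) F z = false.
Proof.
move=> sK ps Ps Fs; rewrite (bigID p) /=.
rewrite [X in _ (+) X](reindex_inj (inv_inj sK)) /=.
rewrite [X in _ (+) X](eq_big (fun z => P z && p z) F) ?addbb // => z.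
by rewrite ps negbK Ps.
Qed.

Section Weight.
Variable n : nat.

Definition flip (j : 'I_n) (z : vec n) : vec n :=
  [ffun i => if i == j then ~~ z i else z i].

Lemma flipK j : involutive (flip j).
Proof. by move=> z; apply/ffunP => i; rewrite !ffunE; case: eqP; rewrite ?negbK. Qed.

Definition clear_on (S : {set 'I_n}) (z : vec n) : vec n :=
  [ffun i => (i \notin S) && z i].

Lemma card_clear_on S : #|[set clear_on S z | z : vec n]| = 2 ^ (n - #|S|).
Proof.
have -> : [set clear_on S z | z : vec n] = [set y in pffun_on false (~: S) predT].
  apply/setP => y; rewrite inE; apply/imsetP/pffun_onP => [[z _ ->]|[yS _]].
    split=> //; apply/subsetP => i; rewrite !inE ffunE; by case: (i \in S).
  exists y => //; apply/ffunP => i; rewrite ffunE.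
  case iS: (i \in S) => //=; apply/negbTE/negP => yi.
  by have := subsetP yS i; rewrite !inE yi iS => /(_ isT).
rewrite cardsE card_pffun_on card_bool; congr (_ ^ _).
have := cardsC S; rewrite card_ord => cardSC.
by rewrite -[X in _ = X - _]cardSC addKn.
Qed.

Definition subcube (S : {set 'I_n}) (y : vec n) : pred (vec n) :=
  [pred z | clear_on S z == clear_on S y].

Lemma sum_subcube_mono_out (S T : {set 'I_n}) y : ~~ (S \subset T) ->
  \big[addb/false]_(z | subcube S y z) mono T z = false.
Proof.
case/subsetPn => j jS jT.
apply: (big_addb_involution (flipK j) (p := fun z : vec n => z j)).
- by move=> z; rewrite ffunE eqxx.
- move=> z; rewrite /subcube inE; congr (_ == _); apply/ffunP => i; rewrite !ffunE.
  by case: eqP => [->|//]; rewrite jS.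
- move=> z; apply: eq_forallb => i; rewrite ffunE.
  by case: eqP => [->|//]; rewrite (negbTE jT).
Qed.

Lemma sum_subcube_mono_self (S : {set 'I_n}) y :
  \big[addb/false]_(z | subcube S y z) mono S z = true.
Proof.
pose top : vec n := [ffun i => (i \in S) || y i].
have top_cube : subcube S y top.
  by apply/eqP/ffunP => i; rewrite !ffunE; case: (i \in S).
rewrite (bigD1 top) //=; rewrite big1 ?addbF => [|z /andP[/eqP zy ztop]].
  by apply/forallP => i; rewrite ffunE; case: (i \in S).
apply: contraNF ztop => /forallP zS; apply/eqP/ffunP => i; rewrite ffunE.
case iS: (i \in S); first by have := zS i; rewrite iS.
by have := congr1 (fun w : vec n => w i) zy; rewrite !ffunE iS.
Qed.

Lemma sum_subcube_anf_eval (a : {ffun {set 'I_n} -> bool}) S y :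
  a S -> (forall T, a T -> #|T| <= #|S|) ->
  \big[addb/false]_(z | subcube S y z) anf_eval a z = true.
Proof.
move=> aS Smax; rewrite (eq_bigr _ (fun z _ => anf_evalE a z)) exchange_big /=.
rewrite (bigD1 S) //= -big_distrr /= aS sum_subcube_mono_self big1 // => T TS.
rewrite -big_distrr /=; case aT: (a T) => //=; apply: sum_subcube_mono_out.
by apply: contra TS => ST; rewrite eq_sym eqEcard ST Smax.
Qed.

Lemma has_deg_le_weight (g : vec n -> bool) e :
  has_deg_le g e -> (exists x, g x) -> 2 ^ (n - e) <= #|[pred x | g x]|.
Proof.
move=> [a [ga ad]] [x0 gx0].
have [S0 aS0] : exists S, a S.
  apply/existsP; apply: contraLR gx0 => /existsPn a0.
  by rewrite ga /anf_eval big_pred0 // => S; apply/negbTE/a0.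
have [S aS Smax] := arg_maxnP (fun S : {set 'I_n} => #|S|) aS0.
have cube_hit y : exists2 z, g z & clear_on S z = clear_on S y.
  have [z /andP[gz /eqP zy]|none] := pickP [pred z | g z && subcube S y z].
    by exists z.
  have := sum_subcube_anf_eval y aS Smax; rewrite -(eq_bigr _ (fun z _ => ga z)).
  by rewrite big1 // => z zy; have := none z; rewrite /= zy andbT.
have cubes_hit : [set clear_on S z | z : vec n] \subset clear_on S @: [set z | g z].
  apply/subsetP => _ /imsetP[w _ ->]; have [z gz <-] := cube_hit w.
  by apply: imset_f; rewrite inE.
have := leq_trans (subset_leq_card cubes_hit) (leq_imset_card _ _).
rewrite card_clear_on cardsE; apply: leq_trans.
by rewrite leq_pexp2l // leq_sub2l // ad.
Qed.

End Weight.

Lemma big_minn_le (I : eqType) (r : seq I) (P : pred I) (F : I -> nat) m i0 :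
  i0 \in r -> P i0 -> \big[minn/m]_(i <- r | P i) F i <= F i0.
Proof.
elim: r => //= i r IHr; rewrite inE big_cons => /orP[/eqP <-|i0r] Pi0.
  by rewrite Pi0 geq_minl.
by case: (P i); rewrite ?geq_min (IHr i0r Pi0) ?orbT.
Qed.

Section Annihilators.
Variable n : nat.
Implicit Types (h H delta : boolfun n).

Lemma LDA_leSn h : LDA h <= n.+1.
Proof.
by rewrite /LDA; elim/big_ind: _ => // [x y xn _|j _]; rewrite ?geq_min ?xn // ltnW.
Qed.

Lemma LDA_le h j : has_ann_le h j -> LDA h <= j.
Proof.
move=> hj; have [jn|nj] := leqP j n; last exact: leq_trans (LDA_leSn h) nj.
exact: (big_minn_le _ _ (mem_index_enum (Ordinal (jn : j < n.+1))) hj).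
Qed.

Lemma has_ann_le_LDA h : LDA h <= n -> has_ann_le h (LDA h).
Proof.
suff [->|//] : LDA h = n.+1 \/ has_ann_le h (LDA h) by rewrite ltnn.
rewrite /LDA; elim/big_ind: _ => [|x y xP yP|j hj]; [by left | | by right].
by rewrite /minn; case: ifP.
Qed.

Lemma has_deg_le_off_sparse (g delta : boolfun n) e :
  g != bf_zero n -> has_deg_le g e -> wH delta < 2 ^ (n - e) ->
  exists x, g x && ~~ delta x.
Proof.
move=> g0 ge small; apply/existsP; apply: contraLR small => /existsPn off.
rewrite -leqNgt; apply: leq_trans (has_deg_le_weight ge _) _.
  apply/existsP; apply: contraNT g0 => /existsPn g0.
  by apply/eqP/ffunP => x; rewrite ffunE; apply/negbTE/g0.
apply: subset_leq_card; apply/subsetP => x; rewrite !inE => gx.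
by have := off x; rewrite gx negbK.
Qed.

Lemma has_ann_le_add_sparse H delta e d :
  has_ann_le H e -> wH delta < 2 ^ (n - e) -> (wH delta).+1 < 2 ^ d.+1 ->
  has_ann_le (bf_add H delta) (e + d).
Proof.
move=> /existsP[g /and3P[g0 /eqP Hg /deg_leP ge]] small wd.
have [x /andP[gx dx]] := has_deg_le_off_sparse g0 ge small.
have card_xdelta : #|x |: [set z | delta z]| < 2 ^ d.+1.
  rewrite cardsU1 (eq_card (B := [pred z | delta z])) => [|z]; last by rewrite inE.
  by apply: leq_ltn_trans wd; rewrite -add1n leq_add2r leq_b1.
have [h hd hx] := interpolation (fun z => z == x) card_xdelta.
apply/existsP; exists [ffun z => g z && h z]; apply/and3P; split.
- by apply/eqP => /ffunP /(_ x); rewrite !ffunE gx hx ?setU11 ?eqxx.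
- apply/eqP/ffunP => z; rewrite !ffunE.
  case gz: (g z); last by rewrite andbF.
  have := congr1 (fun F : boolfun n => F z) Hg; rewrite /= !ffunE gz andbT => ->.
  case dz: (delta z) => //=; rewrite hx ?inE ?dz ?orbT //.
  by apply/eqP => zx; move: dx; rewrite -zx dz.
- apply/deg_leP; apply: (has_deg_le_ext (has_deg_le_mul ge hd)) => z.
  by rewrite ffunE.
Qed.

End Annihilators.

Section AlgebraicImmunity.
Variable n : nat.
Implicit Types (f h delta : boolfun n).

Lemma bf_addK f delta : bf_add (bf_add f delta) delta = f.
Proof. by apply/ffunP => x; rewrite !ffunE addbK. Qed.

Lemma bf_add_oneA f delta :
  bf_add (bf_add (bf_one n) f) delta = bf_add (bf_one n) (bf_add f delta).
Proof. by apply/ffunP => x; rewrite !ffunE addbA. Qed.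

Lemma LDA_add_le h delta d :
  wH delta < 2 ^ (n - LDA h) -> (wH delta).+1 < 2 ^ d.+1 ->
  LDA (bf_add h delta) <= LDA h + d.
Proof.
move=> small wd; have [hn|nh] := leqP (LDA h) n.
  exact: LDA_le (has_ann_le_add_sparse (has_ann_le_LDA hn) small wd).
by apply: leq_trans (LDA_leSn _) _; apply: leq_trans nh (leq_addr _ _).
Qed.

Lemma AI_add_le f delta d :
  wH delta < 2 ^ (n - AI f) -> (wH delta).+1 < 2 ^ d.+1 ->
  AI (bf_add f delta) <= AI f + d.
Proof.
rewrite /AI; case: (leqP (LDA f) (LDA (bf_add (bf_one n) f))) => _ small wd.
  by apply: leq_trans (geq_minl _ _) (LDA_add_le small wd).
by rewrite -bf_add_oneA; apply: leq_trans (geq_minr _ _) (LDA_add_le small wd).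
Qed.

End AlgebraicImmunity.

Theorem proposition12 (n k d : nat) (f delta : boolfun n) :
  0 < k -> 0 < d -> AI f = k ->
  wH delta < minn (2 ^ (n - k)) (2 ^ d.+1 - 1) ->
  AI (bf_add f delta) <= AI f + d /\ AI f <= AI (bf_add f delta) + d.
Proof.
move=> _ _ <-; rewrite leq_min => /andP[small wd].
have {}wd : (wH delta).+1 < 2 ^ d.+1 by rewrite ltn_subRL add1n in wd.
split; first exact: AI_add_le.
have [le|lt] := leqP (AI f) (AI (bf_add f delta)).
  exact: leq_trans le (leq_addr _ _).
rewrite -{1}(bf_addK f delta); apply: AI_add_le wd.
by apply: leq_trans small _; rewrite leq_pexp2l // leq_sub2l // ltnW.
Qed.
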